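(* Let $\sigma:\mathbb{R}^d\to\mathbb{R}^{d\times m}$ and $b:\mathbb{R}^d\to\mathbb{R}^d$ be continuous functions such that for some $C>0$ and all $x,y\in\mathbb{R}^d$ with $|x-y|<1$, $$\|\sigma(x)-\sigma(y)\|\le C|x-y|\sqrt{\log\tfrac{1}{|x-y|}},\qquad |b(x)-b(y)|\le C|x-y|\log\tfrac{1}{|x-y|}.$$ Then $\sigma$ and $b$ satisfy the following condition: there exist constants $C>0$ and $\mu>0$ such that for every integer $N>e$ and all $x,y\in\mathbb{R}^d$ with $|x|,|y|\le N$, $$\|\sigma(x)-\sigma(y)\|\le C\sqrt{\log N}\,|x-y|+C\frac{\log N}{N^{\mu}},\qquad |b(x)-b(y)|\le C\log N\,|x-y|+C\frac{\log N}{N^{\mu}}.$$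
   Context: $|\cdot|$ is the Euclidean norm and $\|\sigma\|^2=\sum_{i,j}\sigma_{ij}^2$. The expressions $u\log(1/u)$ and $u\sqrt{\log(1/u)}$ are taken to be $0$ at $u=0$. *)

From HB Require Import structures.
From mathcomp Require Import all_boot all_order all_algebra.
From mathcomp Require Import all_classical all_reals all_analysis.
Set Implicit Arguments. Unset Strict Implicit. Unset Printing Implicit Defensive.
Import Order.TTheory GRing.Theory Num.Theory.
Local Open Scope ring_scope.

Definition eucl {R : realType} {d : nat} (x : 'rV[R]_d) : R :=
  Num.sqrt (\sum_(i < d) x 0 i ^+ 2).

Definition frob {R : realType} {d m : nat} (s : 'M[R]_(d, m)) : R :=
  Num.sqrt (\sum_(i < d) \sum_(j < m) s i j ^+ 2).

From HB Require Import structures.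
From mathcomp Require Import all_boot all_order all_algebra.
From mathcomp Require Import all_classical all_reals all_analysis.
From mathcomp Require Import ring lra.
Import Order.TTheory GRing.Theory Num.Theory numFieldNormedType.Exports.
Local Open Scope ring_scope.

(* Write r = |x - y| and let H be the modulus, sqrt(ln 1/r) for sigma and ln 1/r
   for b; both satisfy r H(r) <= 3 sqrt r on [0, 1). Points at distance r >= 1 are
   joined by trunc r + 1 steps of length < 1, each costing at most 3C, which gives
   6 C r. For 1/N <= r < 1 we have H(r) <= H(1/N), i.e. sqrt(ln N) resp. ln N. For
   r < 1/N the increment is at most 3 C sqrt r <= 3 C / sqrt N, so mu = 1/2 works. *)

Section SumOfSquares.
Context {R : realType} {I : finType}.
Implicit Types a b : I -> R.

Lemma sum_sqr_ge0 a : 0 <= \sum_i a i ^+ 2.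
Proof. by rewrite sumr_ge0 // => i _; rewrite sqr_ge0. Qed.

Lemma sqrt_sum_sqr_eq0 a : Num.sqrt (\sum_i a i ^+ 2) = 0 -> forall i, a i = 0.
Proof.
move/eqP; rewrite sqrtr_eq0 => le0 i.
have sum0 : \sum_i a i ^+ 2 = 0 by apply/eqP; rewrite eq_le le0 sum_sqr_ge0.
have := psumr_eq0P (P := predT) (fun j _ => sqr_ge0 (a j)) sum0 (i := i) isT.
by move/eqP; rewrite sqrf_eq0 => /eqP.
Qed.

Lemma sum_mul_le_sqrt_sum_sqr a b :
  \sum_i a i * b i <= Num.sqrt (\sum_i a i ^+ 2) * Num.sqrt (\sum_i b i ^+ 2).
Proof.
set A := \sum_i a i ^+ 2; set B := \sum_i b i ^+ 2.
set sa := Num.sqrt A; set sb := Num.sqrt B.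
have [sa0|sa_neq0] := eqVneq sa 0.
  by rewrite sa0 mul0r big1 // => i _; rewrite (sqrt_sum_sqr_eq0 _ sa0) mul0r.
have [sb0|sb_neq0] := eqVneq sb 0.
  by rewrite sb0 mulr0 big1 // => i _; rewrite (sqrt_sum_sqr_eq0 _ sb0) mulr0.
have sasb_gt0 : 0 < sa * sb by rewrite mulr_gt0 // lt0r ?sa_neq0 ?sb_neq0 ?sqrtr_ge0.
have hA : sa ^+ 2 = A by rewrite sqr_sqrtr // sum_sqr_ge0.
have hB : sb ^+ 2 = B by rewrite sqr_sqrtr // sum_sqr_ge0.
have expand : \sum_i (a i * sb - b i * sa) ^+ 2
    = sb ^+ 2 * A - 2 * (sa * sb) * \sum_i a i * b i + sa ^+ 2 * B.
  rewrite !mulr_sumr -sumrB -big_split /=; apply: eq_bigr => i _; ring.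
have := sum_sqr_ge0 (fun i => a i * sb - b i * sa).
rewrite expand -hA -hB; nra.
Qed.

Lemma sqrt_sum_sqrD_le a b :
  Num.sqrt (\sum_i (a i + b i) ^+ 2)
    <= Num.sqrt (\sum_i a i ^+ 2) + Num.sqrt (\sum_i b i ^+ 2).
Proof.
have expand : \sum_i (a i + b i) ^+ 2
    = \sum_i a i ^+ 2 + 2 * \sum_i a i * b i + \sum_i b i ^+ 2.
  rewrite mulr_sumr -!big_split /=; apply: eq_bigr => i _; ring.
have hA := sqr_sqrtr (sum_sqr_ge0 a); have hB := sqr_sqrtr (sum_sqr_ge0 b).
have := sum_mul_le_sqrt_sum_sqr a b.
have s0 : 0 <= Num.sqrt (\sum_i a i ^+ 2) + Num.sqrt (\sum_i b i ^+ 2).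
  by rewrite addr_ge0 ?sqrtr_ge0.
rewrite -(ger0_norm s0) -sqrtr_sqr ler_sqrt ?sqr_ge0 // expand.
move: hA hB; set sa := Num.sqrt _; set sb := Num.sqrt _; nra.
Qed.

End SumOfSquares.

Section Norms.
Context {R : realType} {d m : nat}.

Lemma eucl_ge0 (x : 'rV[R]_d) : 0 <= eucl x.
Proof. exact: sqrtr_ge0. Qed.

Lemma ler_euclD (x y : 'rV[R]_d) : eucl (x + y) <= eucl x + eucl y.
Proof.
rewrite /eucl (eq_bigr (fun i => (x 0 i + y 0 i) ^+ 2)) => [|i _]; last by rewrite mxE.
exact: sqrt_sum_sqrD_le.
Qed.

Lemma ler_frobD (x y : 'M[R]_(d, m)) : frob (x + y) <= frob x + frob y.
Proof.
rewrite /frob !pair_bigA /=.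
have -> : \sum_p (x + y) p.1 p.2 ^+ 2
    = \sum_(p : 'I_d * 'I_m) (x p.1 p.2 + y p.1 p.2) ^+ 2.
  by apply: eq_bigr => p _; rewrite mxE.
exact: (sqrt_sum_sqrD_le (fun p : 'I_d * 'I_m => x p.1 p.2) (fun p => y p.1 p.2)).
Qed.

Lemma euclZ (c : R) (x : 'rV[R]_d) : eucl (c *: x) = `|c| * eucl x.
Proof.
rewrite /eucl (eq_bigr (fun i => c ^+ 2 * x 0 i ^+ 2)) => [|i _].
  by rewrite -mulr_sumr sqrtrM ?sqr_ge0 // sqrtr_sqr.
by rewrite mxE exprMn.
Qed.

End Norms.

Section Chaining.
Context {R : realType} {d : nat} {V : zmodType} {nv : V -> R}.
Hypothesis ler_nvD : forall u v, nv (u + v) <= nv u + nv v.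
Context {F : 'rV[R]_d -> V}.

(* Cut the segment [y, x] into M = trunc |x - y| + 1 pieces of length < 1. *)
Lemma increment_le_chain (K : R) : 0 <= K ->
    (forall x y, eucl (x - y) < 1 -> nv (F x - F y) <= K) ->
  forall x y, nv (F x - F y) <= K * (eucl (x - y) + 1).
Proof.
move=> K0 short x y; set r := eucl (x - y); set M := (Num.truncn r).+1.
have M_gt0 : 0 < M%:R :> R by rewrite ltr0n.
pose p k := y + (k%:R / M%:R) *: (x - y).
have p_step k : nv (F (p k.+1) - F (p k)) <= K.
  apply: short.
  have -> : p k.+1 - p k = M%:R^-1 *: (x - y).
    rewrite /p opprD addrACA subrr add0r -scalerBl -natr1 mulrDl addrAC subrr.
    by rewrite add0r mul1r.
  by rewrite euclZ ger0_norm ?invr_ge0 ?ltW // mulrC ltr_pdivrMr // mul1r truncnS_gt.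
have p_chain n : nv (F (p n.+1) - F (p 0)) <= n.+1%:R * K.
  elim: n => [|n IH]; first by rewrite mul1r p_step.
  rewrite -(subrKA (F (p n.+1))) -(@natr1 R n.+1) mulrDl mul1r (addrC _ K).
  exact: le_trans (ler_nvD _ _) (lerD (p_step _) IH).
have pM : p M = x by rewrite /p divff ?gt_eqF // scale1r addrC subrK.
have p0 : p 0 = y by rewrite /p mul0r scale0r addr0.
have := p_chain (Num.truncn r); rewrite -/M pM p0 => /le_trans; apply.
by rewrite mulrC ler_wpM2l // -natr1 lerD2r truncn_le eucl_ge0.
Qed.

End Chaining.

Section LogModuli.
Context {R : realType}.
Implicit Types r N : R.

(* At [r = 0] the junk values [0^-1 = 0] and [ln 0 = 0] make [ln r^-1] vanish. *)
Lemma lnV_ge0 r : 0 <= r <= 1 -> 0 <= ln r^-1.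
Proof.
case/andP; rewrite le_eqVlt => /predU1P[<- _|r_gt0 r_le1]; first by rewrite invr0 ln0.
by apply: ln_ge0; rewrite invf_ge1.
Qed.

Lemma lnV_le r N : 0 < N -> N^-1 <= r -> ln r^-1 <= ln N.
Proof.
move=> N_gt0 Nr; have r_gt0 : 0 < r by apply: lt_le_trans Nr; rewrite invr_gt0.
by rewrite ler_ln ?posrE ?invr_gt0 // -[N]invrK lef_pV2 ?posrE ?invr_gt0.
Qed.

(* [ln s^-1 < s^-1] applied at [s = sqrt r]. *)
Lemma mulr_lnV_le_sqrt r : 0 <= r -> r * ln r^-1 <= 2 * Num.sqrt r.
Proof.
rewrite le_eqVlt => /predU1P[<-|r_gt0]; first by rewrite mul0r sqrtr0 mulr0.
set s := Num.sqrt r; have s_gt0 : 0 < s by rewrite sqrtr_gt0.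
have r_eq : r = s ^+ 2 by rewrite sqr_sqrtr // ltW.
have ln_lt : ln s^-1 < s^-1 by rewrite ln_sublinear // invr_gt0.
rewrite r_eq -exprVn lnXn ?invr_gt0 // mulr2n.
have -> : s ^+ 2 * (ln s^-1 + ln s^-1) = 2 * (s * (s * ln s^-1)) by ring.
rewrite ler_pM2l // -[leRHS]mulr1 ler_pM2l //.
by rewrite -(mulfV (lt0r_neq0 s_gt0)) ler_pM2l // ltW.
Qed.

Lemma mulr_sqrt_lnV_le_sqrt r : 0 <= r <= 1 -> r * Num.sqrt (ln r^-1) <= 3 * Num.sqrt r.
Proof.
move=> r01; have /andP[r_ge0 r_le1] := r01.
have l_ge0 := lnV_ge0 _ r01; set l := ln r^-1 in l_ge0 *.
have sqrt_l : Num.sqrt l <= 1 + l.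
  have l1_ge0 : 0 <= 1 + l by lra.
  rewrite -(ger0_norm l1_ge0) -sqrtr_sqr ler_sqrt ?sqr_ge0 //; nra.
have r_le_sqrt : r <= Num.sqrt r.
  have s_le1 : Num.sqrt r <= 1 by rewrite -sqrtr1 ler_wsqrtr.
  have := sqrtr_ge0 r; have := sqr_sqrtr r_ge0; nra.
have := mulr_lnV_le_sqrt _ r_ge0; rewrite -/l => rl.
have : r * Num.sqrt l <= r * (1 + l) by rewrite ler_wpM2l.
nra.
Qed.

End LogModuli.

Section ModulusOfContinuity.
Context {R : realType} {d : nat} {V : zmodType} {nv : V -> R}.
Hypothesis ler_nvD : forall u v, nv (u + v) <= nv u + nv v.
Context {F : 'rV[R]_d -> V} {C : R} {H : R -> R}.
Hypothesis C_gt0 : 0 < C.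
Hypothesis modulus_le_sqrt : forall r, 0 <= r < 1 -> r * H r <= 3 * Num.sqrt r.
Hypothesis F_modulus : forall x y, eucl (x - y) < 1 ->
  nv (F x - F y) <= C * eucl (x - y) * H (eucl (x - y)).

Lemma short_increment_le_sqrt x y : eucl (x - y) < 1 ->
  nv (F x - F y) <= 3 * C * Num.sqrt (eucl (x - y)).
Proof.
move=> r_lt1; apply: le_trans (F_modulus _ _ r_lt1) _.
rewrite -mulrA -[3 * C]mulrC -mulrA ler_pM2l //; apply: modulus_le_sqrt.
by rewrite eucl_ge0.
Qed.

Lemma long_increment_le x y : 1 <= eucl (x - y) ->
  nv (F x - F y) <= 6 * C * eucl (x - y).
Proof.
have short_le u v : eucl (u - v) < 1 -> nv (F u - F v) <= 3 * C.
  move=> r_lt1; apply: le_trans (short_increment_le_sqrt _ _ r_lt1) _.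
  by rewrite -[leRHS]mulr1 ler_pM2l ?mulr_gt0 // -sqrtr1 ler_wsqrtr // ltW.
have K_ge0 : 0 <= 3 * C by rewrite mulr_ge0 // ltW.
move=> r_ge1; apply: le_trans (increment_le_chain ler_nvD _ K_ge0 short_le x y) _.
nra.
Qed.

Lemma increment_le_log_modulus (L N : R) : 1 <= L -> 1 <= ln N ->
    (forall r, N^-1 <= r < 1 -> H r <= L) ->
  forall x y, nv (F x - F y)
    <= 6 * C * L * eucl (x - y) + 6 * C * (ln N / N `^ 2^-1).
Proof.
move=> L_ge1 lnN_ge1 H_le_L x y; set r := eucl (x - y).
have r_ge0 : 0 <= r := eucl_ge0 _.
have N_gt0 : 0 < N by rewrite ltNge; apply: contraL lnN_ge1 => /ln0 ->; rewrite ler10.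
have sqrtN_gt0 : 0 < Num.sqrt N by rewrite sqrtr_gt0.
rewrite powR12_sqrt; last exact: ltW.
have tail_ge0 : 0 <= 6 * C * (ln N / Num.sqrt N).
  by rewrite mulr_ge0 ?divr_ge0 ?sqrtr_ge0 // ?mulr_ge0 ?ltW //; lra.
have Cr_ge0 : 0 <= C * r by rewrite mulr_ge0 // ltW.
have [r_lt1|r_ge1] := ltP r 1; last first.
  have := long_increment_le _ _ r_ge1; rewrite -/r; nra.
have [Nr|rN] := leP N^-1 r.
  apply: le_trans (F_modulus _ _ r_lt1) _; rewrite -/r.
  have := H_le_L r; rewrite Nr r_lt1 => /(_ isT); nra.
apply: le_trans (short_increment_le_sqrt _ _ r_lt1) _; rewrite -/r.
have sqrt_r : Num.sqrt r <= ln N / Num.sqrt N.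
  rewrite (le_trans (ler_wsqrtr (ltW rN))) // sqrtrV; last exact: ltW.
  by rewrite ler_pdivlMr // mulVf ?gt_eqF.
have CLr_ge0 : 0 <= C * L * r by rewrite -mulrAC mulr_ge0 //; lra.
have : 3 * C * Num.sqrt r <= 3 * C * (ln N / Num.sqrt N) by rewrite ler_pM2l ?mulr_gt0.
lra.
Qed.

End ModulusOfContinuity.

Theorem proposition4p7 (R : realType) (d m : nat)
    (sigma : 'rV[R]_d -> 'M[R]_(d, m)) (b : 'rV[R]_d -> 'rV[R]_d) :
  continuous sigma -> continuous b ->
  (exists C : R, 0 < C /\
     forall x y : 'rV[R]_d, eucl (x - y) < 1 ->
       frob (sigma x - sigma y)
         <= C * eucl (x - y) * Num.sqrt (ln (eucl (x - y))^-1) /\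
       eucl (b x - b y)
         <= C * eucl (x - y) * ln (eucl (x - y))^-1) ->
  exists C mu : R, 0 < C /\ 0 < mu /\
    forall N : nat, expR (1:R) < N%:R ->
    forall x y : 'rV[R]_d, eucl x <= N%:R -> eucl y <= N%:R ->
      frob (sigma x - sigma y)
        <= C * Num.sqrt (ln N%:R) * eucl (x - y)
           + C * (ln N%:R / (N%:R `^ mu)) /\
      eucl (b x - b y)
        <= C * ln N%:R * eucl (x - y) + C * (ln N%:R / (N%:R `^ mu)).
Proof.
move=> _ _ [C [C_gt0 HC]].
exists (6 * C), 2^-1; split; first by rewrite mulr_gt0.
split=> [|N eN x y _ _]; first by rewrite invr_gt0.
have N_gt0 : 0 < N%:R :> R := lt_trans (expR_gt0 1) eN.
have lnN_ge1 : 1 <= ln (N%:R : R).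
  by rewrite -[leLHS](expRK 1) ler_ln ?posrE ?expR_gt0 // ltW.
have short01 (r : R) : 0 <= r < 1 -> 0 <= r <= 1 by case/andP=> -> /ltW ->.
split.
- apply: (increment_le_log_modulus (H := fun r => Num.sqrt (ln r^-1)) ler_frobD C_gt0) => //.
  + by move=> r /short01; exact: mulr_sqrt_lnV_le_sqrt.
  + by move=> u v /HC[].
  + by rewrite -[leLHS]sqrtr1 ler_sqrt //; exact: le_trans ler01 lnN_ge1.
  + by move=> r /andP[Nr _]; rewrite ler_wsqrtr // lnV_le.
- apply: (increment_le_log_modulus (H := fun r => ln r^-1) ler_euclD C_gt0) => //.
  + move=> r /andP[r_ge0 _]; have := mulr_lnV_le_sqrt _ r_ge0.
    have := sqrtr_ge0 r; lra.
  + by move=> u v /HC[].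
  + by move=> r /andP[Nr _]; rewrite lnV_le.
Qed.
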